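(* Let $l$ be a (random) convex and differentiable loss function on $\mathbb{R}^p$, let $\lambda_1\ge\dots\ge\lambda_p\ge 0$ be arbitrary, and let $\hat b$ be a minimizer of $l(b)+\sum_{i=1}^p\lambda_i|b|_{(i)}$. Let $b^0\in\mathbb{R}^p$ be a fixed vector with support $S=\{j:b^0_j\neq 0\}$ and $S^c=\{1,\dots,p\}\setminus S$. Then for any $a>0$, $$FDR=\sum_{r=1}^p\frac1r\sum_{i\in S^c}P\big(|T_i(a)|>\lambda_r,\ T(a)\in H_r\big).$$
   Context: $|w|_{(1)}\ge\dots\ge|w|_{(p)}$ are the ordered absolute values of $w\in\mathbb{R}^p$. $U(b)=-\nabla l(b)$ and $T(a)=U(\hat b)+a\hat b$. $FDR=\mathbb{E}(V/(R\vee1))$ with $V=\#\{j:b^0_j=0,\hat b_j\neq0\}$ and $R=\#\{j:\hat b_j\neq0\}$. For $r\in\{1,\dots,p\}$, $$H_r=\Big\{w\in\mathbb{R}^p:\ \forall_{j\le r}\ \sum_{i=j}^r\lambda_i<\sum_{i=j}^r|w|_{(i)}\ \text{ and }\ \forall_{j\ge r+1}\ \sum_{i=r+1}^j\lambda_i\ge\sum_{i=r+1}^j|w|_{(i)}\Big\}.$$ *)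

From HB Require Import structures.
From mathcomp Require Import all_boot all_order all_algebra.
From mathcomp Require Import all_classical all_reals all_analysis.
Set Implicit Arguments. Unset Strict Implicit. Unset Printing Implicit Defensive.
Import Order.TTheory GRing.Theory Num.Theory.
Import numFieldNormedType.Exports.
Local Open Scope ring_scope.

(* sorted absolute values, 0-based: sabs w i = |w|_(i+1) *)
Definition sabs {R : realType} {p : nat} (w : 'rV[R]_p) (i : nat) : R :=
  nth 0 (sort (fun x y : R => y <= x) [seq `|w 0 j| | j <- enum 'I_p]) i.

(* SLOPE penalty J_lambda(b) = sum_{i=1}^p lambda_i |b|_(i); lam 0-based *)
Definition slope_pen {R : realType} {p : nat} (lam : nat -> R) (b : 'rV[R]_p) : R :=
  \sum_(0 <= i < p) lam i * sabs b i.

Definition grad {R : realType} {p : nat} (f : 'rV[R]_p -> R) (b : 'rV[R]_p)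
  : 'rV[R]_p := \row_j ('D_(delta_mx 0 j) f b).

Definition convex_fun {R : realType} {p : nat} (f : 'rV[R]_p -> R) : Prop :=
  forall (x y : 'rV[R]_p) (t : R), 0 <= t -> t <= 1 ->
    f (t *: x + (1 - t) *: y) <= t * f x + (1 - t) * f y.

(* H_r (r is 1-based as in the paper, lam and sabs are 0-based):
   for all paper-j <= r : sum_{i=j}^r lambda_i < sum_{i=j}^r |w|_(i)
   for all paper-j >= r+1 (j <= p) : sum_{i=r+1}^j lambda_i >= sum_{i=r+1}^j |w|_(i) *)
Definition H_set {R : realType} {p : nat} (lam : nat -> R) (r : nat) (w : 'rV[R]_p) : Prop :=
  (forall j : nat, (j < r)%N ->
     \sum_(j <= i < r) lam i < \sum_(j <= i < r) sabs w i) /\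
  (forall j : nat, (r < j <= p)%N ->
     \sum_(r <= i < j) sabs w i <= \sum_(r <= i < j) lam i).

Definition nV {R : realType} {p : nat} (b0 bh : 'rV[R]_p) : nat :=
  #|[set j : 'I_p | (b0 0 j == 0) && (bh 0 j != 0)]|.
Definition nR {R : realType} {p : nat} (bh : 'rV[R]_p) : nat :=
  #|[set j : 'I_p | bh 0 j != 0]|.

(* Let u = -grad l(bhat) and let J be the SLOPE penalty.  Minimality of bhat and
   convexity of J give the first-order condition <u, c - bhat> <= J c - J bhat for
   every c.  Since J c = sum_k (lambda_k - lambda_(k+1)) S_k(c), where S_k(c) is the
   sum of the k largest |c_j|, testing the condition on signed indicator vectors
   shows that any k entries of |u| sum to at most lambda_1 + ... + lambda_k, and
   testing it on a small shrinkage of bhat towards 0 shows equality on the support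
   of bhat, with u carrying the signs of bhat there.  Hence |T_j| = |u_j| + a|bhat_j|,
   so with R = #supp bhat the R largest entries of |T| sit on the support, T lies in
   H_R, and |T_i| > lambda_R exactly on the support.  The sets H_r being disjoint,
   {|T_i| > lambda_r, T in H_r} = {bhat_i <> 0, R = r}, and the formula is the
   expectation of V / max(R, 1) = sum_r 1/r sum_(i in S^c) 1{bhat_i <> 0, R = r}. *)

From HB Require Import structures.
From mathcomp Require Import all_boot all_order all_algebra.
From mathcomp Require Import all_classical all_reals all_analysis.
From mathcomp Require Import measurable_realfun.
From mathcomp Require Import ring lra.
Import Order.TTheory GRing.Theory Num.Theory.
Import numFieldNormedType.Exports.
Local Open Scope ring_scope.

Lemma card_le_ord {p : nat} (B : {set 'I_p}) : (#|B| <= p)%N.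
Proof. by rewrite -[X in (_ <= X)%N]card_ord max_card. Qed.

Section TopSum.
Context {R : realType} {p : nat}.
Implicit Types (w x y : 'rV[R]_p) (B : {set 'I_p}).

Definition abs_order w : seq 'I_p :=
  sort (fun i j => `|w 0 j| <= `|w 0 i|) (enum 'I_p).

Definition top_set w k : {set 'I_p} := [set j in take k (abs_order w)].

Definition top_sum w k : R := \sum_(j in top_set w k) `|w 0 j|.

Lemma abs_order_uniq w : uniq (abs_order w).
Proof. by rewrite sort_uniq enum_uniq. Qed.

Lemma size_abs_order w : size (abs_order w) = p.
Proof. by rewrite size_sort size_enum_ord. Qed.

Lemma card_top_set w k : (k <= p)%N -> #|top_set w k| = k.
Proof.
move=> kp; rewrite cardsE (card_uniqP _) ?take_uniq ?abs_order_uniq //.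
by rewrite size_take_min size_abs_order (minn_idPl kp).
Qed.

Lemma top_sumE w k : top_sum w k = \sum_(j <- take k (abs_order w)) `|w 0 j|.
Proof.
rewrite /top_sum big_uniq ?take_uniq ?abs_order_uniq //.
by apply: eq_bigl => j; rewrite inE.
Qed.

Lemma sum_sabs w k : (k <= p)%N -> \sum_(0 <= i < k) sabs w i = top_sum w k.
Proof.
move=> kp; rewrite top_sumE -(big_map (fun j => `|w 0 j|) xpredT id).
rewrite [RHS](big_nth 0) size_map size_take_min size_abs_order (minn_idPl kp).
apply: eq_big_nat => i /andP[_ ik].
rewrite /sabs map_take nth_take //.
by rewrite /abs_order (map_sort (leT := fun x y : R => y <= x)).
Qed.

Lemma abs_top_set_ge {w k i j} :
  i \in top_set w k -> j \notin top_set w k -> `|w 0 j| <= `|w 0 i|.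
Proof.
rewrite !inE => hi hj.
have le_abs_trans : transitive (fun i j : 'I_p => `|w 0 j| <= `|w 0 i|).
  by move=> ? ? ? h1 h2; exact: le_trans h2 h1.
have := sort_sorted (fun i j => le_total `|w 0 j| `|w 0 i|) (enum 'I_p).
rewrite -/(abs_order w) (sorted_pairwise le_abs_trans).
rewrite -(cat_take_drop k (abs_order w)) pairwise_cat => /and3P[/allrelP + _ _].
apply=> //; have : j \in abs_order w by rewrite mem_sort mem_enum.
by rewrite -{1}(cat_take_drop k (abs_order w)) mem_cat (negbTE hj).
Qed.

Lemma top_sum_max w B : \sum_(j in B) `|w 0 j| <= top_sum w #|B|.
Proof.
set T := top_set w #|B|.
rewrite /top_sum -/T (big_setID T) [X in _ <= X](big_setID B) /= finset.setIC lerD2l.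
set n := #|B :\: T|.
have cTB : #|T :\: B| = n.
  by rewrite /n !cardsD card_top_set ?card_le_ord // finset.setIC.
have [n0|n_gt0] := eqVneq n 0%N.
  move: n0; rewrite /n => /eqP; rewrite cards_eq0 => /eqP ->.
  by rewrite big_set0 sumr_ge0.
(* Each of the [n] elements of [T :\: B] dominates each of the [n] elements of
   [B :\: T]. *)
have lhsE : \sum_(j in B :\: T) \sum_(i in T :\: B) `|w 0 j|
            = (\sum_(j in B :\: T) `|w 0 j|) *+ n.
  by rewrite -sumrMnl; apply: eq_bigr => j _; rewrite sumr_const cTB.
suff: \sum_(j in B :\: T) \sum_(i in T :\: B) `|w 0 j|
      <= \sum_(j in B :\: T) \sum_(i in T :\: B) `|w 0 i|.
  by rewrite lhsE sumr_const lerMn2r (negbTE n_gt0).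
apply: ler_sum => j; rewrite inE => /andP[jT _].
apply: ler_sum => i; rewrite inE => /andP[_ iT].
exact: abs_top_set_ge iT jT.
Qed.

Lemma top_sum0 w : top_sum w 0 = 0.
Proof. by rewrite top_sumE take0 big_nil. Qed.

Lemma top_sum_zero k : top_sum (0 : 'rV[R]_p) k = 0.
Proof. by rewrite /top_sum big1 // => j _; rewrite mxE normr0. Qed.

Lemma top_sumZ t w k : 0 <= t -> (k <= p)%N -> top_sum (t *: w) k = t * top_sum w k.
Proof.
move=> t0 kp; have absZ (v : 'rV[R]_p) j : `|(t *: v) 0 j| = t * `|v 0 j|.
  by rewrite mxE normrM ger0_norm.
apply/eqP; rewrite eq_le; apply/andP; split.
  rewrite {1}/top_sum; under eq_bigr do rewrite absZ.
  rewrite -mulr_sumr ler_wpM2l //.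
  by have := top_sum_max w (top_set (t *: w) k); rewrite card_top_set.
rewrite {1}/top_sum mulr_sumr; under eq_bigr do rewrite -absZ.
by have := top_sum_max (t *: w) (top_set w k); rewrite card_top_set.
Qed.

Lemma top_sumD x y k : (k <= p)%N -> top_sum (x + y) k <= top_sum x k + top_sum y k.
Proof.
move=> kp; apply: (@le_trans _ _ (\sum_(j in top_set (x + y) k) (`|x 0 j| + `|y 0 j|))).
  by apply: ler_sum => j _; rewrite mxE ler_normD.
rewrite big_split /=.
by apply: lerD; rewrite -[X in top_sum _ X](card_top_set (x + y) k kp) top_sum_max.
Qed.

Lemma sum_natr_mem (A B : {set 'I_p}) : \sum_(j in B) ((j \in A)%:R : R) = #|B :&: A|%:R.
Proof.
rewrite (big_setID A) /= [X in _ + X]big1 ?addr0; last first.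
  by move=> j; rewrite inE => /andP[/negbTE ->].
by rewrite -sum1_card natr_sum; apply: eq_bigr => j; rewrite inE => /andP[_ ->].
Qed.

Lemma top_sum_le_card w B k : (k <= p)%N ->
  (forall j, `|w 0 j| <= (j \in B)%:R) -> top_sum w k <= (minn k #|B|)%:R.
Proof.
move=> kp le_wB; apply: (@le_trans _ _ (\sum_(j in top_set w k) ((j \in B)%:R : R))).
  exact: ler_sum.
rewrite sum_natr_mem ler_nat leq_min.
rewrite -{2}(card_top_set w k kp) !subset_leq_card ?subsetIl ?subsetIr //.
Qed.

Definition supp w : {set 'I_p} := [set j | w 0 j != 0].

Lemma top_set_meets_supp w k : (k <= p)%N ->
  (minn k #|supp w| <= #|top_set w k :&: supp w|)%N.
Proof.
move=> kp; set S := supp w; set B := top_set w k.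
rewrite leqNgt; apply/negP => small.
have /set0Pn[i] : B :\: S != finset.set0.
  rewrite -card_gt0 cardsD card_top_set // subn_gt0.
  exact: leq_trans small (geq_minl _ _).
have /set0Pn[j] : S :\: B != finset.set0.
  rewrite -card_gt0 cardsD subn_gt0 finset.setIC.
  exact: leq_trans small (geq_minr _ _).
move=> /setDP[+ jB] /setDP[iB]; rewrite !inE => wj /negPn/eqP wi.
by move: (abs_top_set_ge iB jB); rewrite wi normr0 normr_le0 (negbTE wj).
Qed.

Lemma sum_abs_supp_all w : \sum_(j in supp w) `|w 0 j| = \sum_j `|w 0 j|.
Proof.
rewrite [RHS](bigID (mem (supp w))) /= [X in _ + X]big1 ?addr0 // => j.
by rewrite inE negbK => /eqP ->; rewrite normr0.
Qed.

Lemma sum_abs_le_all w B : \sum_(j in B) `|w 0 j| <= \sum_j `|w 0 j|.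
Proof. by rewrite [X in _ <= X](bigID (mem B)) /= lerDl sumr_ge0. Qed.

Lemma sum_abs_lt_all w B : (#|B| < #|supp w|)%N ->
  \sum_(j in B) `|w 0 j| < \sum_j `|w 0 j|.
Proof.
move=> small; have /set0Pn[k /setDP[kS kB]] : supp w :\: B != finset.set0.
  rewrite -card_gt0 cardsD subn_gt0; apply: leq_ltn_trans small.
  by rewrite finset.setIC subset_leq_card ?subsetIl.
rewrite [X in _ < X](bigID (mem B)) /= ltrDl (bigD1 k) //=.
by rewrite ltr_pwDl ?sumr_ge0 // normr_gt0; rewrite inE in kS.
Qed.

End TopSum.

Lemma sum_by_parts {R : comRingType} (n : nat) (a s : nat -> R) : s 0%N = 0 ->
  \sum_(0 <= i < n) a i * (s i.+1 - s i) =
  \sum_(0 <= i < n) (a i - a i.+1) * s i.+1 + a n * s n.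
Proof.
move=> s0; elim: n => [|n IH]; first by rewrite !big_geq // s0 mulr0 addr0.
by rewrite !big_nat_recr //= IH; ring.
Qed.

Section SlopePen.
Context {R : realType} {p : nat} (lam : nat -> R).
Hypothesis lam_nonincr : forall i j : nat, (i <= j < p)%N -> lam j <= lam i.
Hypothesis lam_ge0 : forall i : nat, (i < p)%N -> 0 <= lam i.
Local Notation J := (@slope_pen R p lam).
Implicit Types (x y z c : 'rV[R]_p).

Definition lam_ext i := if (i < p)%N then lam i else 0.

Definition Lam k := \sum_(0 <= i < k) lam i.

Lemma lam_ext_step_ge0 i : (i < p)%N -> 0 <= lam_ext i - lam_ext i.+1.
Proof.
move=> ip; rewrite /lam_ext ip subr_ge0; case: ifP => [ip1|_]; last exact: lam_ge0.
by apply: lam_nonincr; rewrite leqnSn.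
Qed.

Lemma slope_pen_top_sum c :
  J c = \sum_(0 <= i < p) (lam_ext i - lam_ext i.+1) * top_sum c i.+1.
Proof.
transitivity (\sum_(0 <= i < p) lam_ext i * (top_sum c i.+1 - top_sum c i)).
  apply: eq_big_nat => i /andP[_ ip]; rewrite /lam_ext ip.
  by rewrite -!sum_sabs ?(ltnW ip) // big_nat_recr //= addrC addrK.
by rewrite sum_by_parts ?top_sum0 // /lam_ext ltnn mul0r addr0.
Qed.

Lemma slope_pen0 : J 0 = 0.
Proof. by rewrite slope_pen_top_sum big1 // => i _; rewrite top_sum_zero mulr0. Qed.

Lemma sum_lam_ext_step_minn k : (k <= p)%N ->
  \sum_(0 <= i < p) (lam_ext i - lam_ext i.+1) * (minn i.+1 k)%:R = Lam k.
Proof.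
move=> kp; have := @sum_by_parts _ p lam_ext (fun i => (minn i k)%:R).
rewrite min0n /lam_ext ltnn mul0r addr0 => <- //.
rewrite (big_cat_nat (leq0n k) kp) /= [X in _ + X]big1_seq ?addr0; last first.
  move=> i /andP[_]; rewrite mem_index_iota => /andP[ki _].
  by rewrite (minn_idPr ki) (minn_idPr (leqW ki)) subrr mulr0.
apply: eq_big_nat => i /andP[_ ik].
rewrite (leq_trans ik kp) (minn_idPl ik) (minn_idPl (ltnW ik)).
by rewrite -natr1 addrAC subrr add0r mulr1.
Qed.

Lemma slope_pen_le_comb x y z (al be : R) : 0 <= al -> 0 <= be ->
  (forall m, (0 < m <= p)%N -> top_sum x m <= al * top_sum y m + be * top_sum z m) ->
  J x <= al * J y + be * J z.
Proof.
move=> al0 be0 le_xyz; rewrite !slope_pen_top_sum !mulr_sumr -big_split /=.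
apply: ler_sum_nat => i /andP[_ ip].
have := lam_ext_step_ge0 i ip; have := le_xyz i.+1 ip; nra.
Qed.

Lemma slope_pen_le_Lam x y (ka : R) k : (k <= p)%N ->
  (forall m, (0 < m <= p)%N -> top_sum x m <= top_sum y m + ka * (minn m k)%:R) ->
  J x <= J y + ka * Lam k.
Proof.
move=> kp le_xy; rewrite !slope_pen_top_sum -(sum_lam_ext_step_minn k kp).
rewrite mulr_sumr -big_split /=; apply: ler_sum_nat => i /andP[_ ip].
have := lam_ext_step_ge0 i ip; have := le_xy i.+1 ip; nra.
Qed.

Lemma slope_pen_convex : convex_fun J.
Proof.
move=> x y t t0 t1; apply: slope_pen_le_comb; rewrite ?subr_ge0 // => m /andP[_ mp].
by apply: le_trans (top_sumD _ _ _ mp) _; rewrite !top_sumZ ?subr_ge0.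
Qed.

Lemma slope_pen_subadd x y : J (x + y) <= J x + J y.
Proof.
rewrite -[J x]mul1r -[J y]mul1r; apply: slope_pen_le_comb => // m /andP[_ mp].
by rewrite !mul1r top_sumD.
Qed.

End SlopePen.

Section FirstOrder.
Context {R : realType} {p : nat}.
Implicit Types (f g : 'rV[R]_p -> R) (b c v : 'rV[R]_p).

Lemma derive_grad f b v : differentiable f b ->
  'D_v f b = \sum_j v 0 j * grad f b 0 j.
Proof.
move=> df; rewrite deriveE // {1}(row_sum_delta v) linear_sum.
by apply: eq_bigr => j _; rewrite linearZ /= /grad mxE deriveE.
Qed.

Lemma convex_min_derive_ge f g b c : convex_fun g -> differentiable f b ->
  (forall c, f b + g b <= f c + g c) -> g b - g c <= 'D_(c - b) f b.
Proof.
move=> cvx_g df b_min.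
have : derivable f b (c - b) by exact: diff_derivable.
move/cvg_dnbhs_at_right.
set q := (fun h => _) => q_cvg; apply: (cvgr_to_ge q_cvg); near=> h.
have h0 : 0 < h by near: h; exact: nbhs_right_gt.
have h1 : h < 1 by near: h; exact: nbhs_right_lt.
have segE : h *: (c - b) + b = h *: c + (1 - h) *: b.
  by apply/rowP => j; rewrite !mxE; ring.
have := b_min (h *: (c - b) + b); have := cvx_g c b h (ltW h0) (ltW h1).
rewrite -segE => g_seg f_seg.
rewrite /q /= -(ler_pM2l h0) mulrA mulfV ?gt_eqF // mul1r; lra.
Unshelve. all: by end_near.
Qed.

Lemma first_order_grad f g b : convex_fun g -> differentiable f b ->
  (forall c, f b + g b <= f c + g c) ->
  forall c, \sum_j (- grad f b) 0 j * (c 0 j - b 0 j) <= g c - g b.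
Proof.
move=> cvx_g df b_min c; have := convex_min_derive_ge _ _ _ c cvx_g df b_min.
rewrite derive_grad //.
have -> : \sum_j (- grad f b) 0 j * (c 0 j - b 0 j)
          = - \sum_j (c - b) 0 j * grad f b 0 j.
  by rewrite -sumrN; apply: eq_bigr => j _; rewrite !mxE; ring.
by rewrite lerNl opprB.
Qed.

End FirstOrder.

Section HSet.
Context {R : realType} {p : nat} (lam : nat -> R).
Implicit Types (w : 'rV[R]_p).

Lemma sum_sabs_range w j r : (j <= r <= p)%N ->
  \sum_(j <= i < r) sabs w i = top_sum w r - top_sum w j.
Proof.
move=> /andP[jr rp]; rewrite -!sum_sabs ?(leq_trans jr rp) //.
by rewrite (big_cat_nat (leq0n j) jr) /= addrC addrK.
Qed.

Lemma sum_lam_range j r : (j <= r)%N -> \sum_(j <= i < r) lam i = Lam lam r - Lam lam j.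
Proof. by move=> jr; rewrite /Lam (big_cat_nat (leq0n j) jr) /= addrC addrK. Qed.

Lemma H_setE w r : (r <= p)%N ->
  H_set lam r w <->
  (forall j, (j < r)%N -> Lam lam r - Lam lam j < top_sum w r - top_sum w j) /\
  (forall j, (r < j <= p)%N -> top_sum w j - top_sum w r <= Lam lam j - Lam lam r).
Proof.
move=> rp; have rangeE j : (j < r)%N ->
    \sum_(j <= i < r) sabs w i = top_sum w r - top_sum w j /\
    \sum_(j <= i < r) lam i = Lam lam r - Lam lam j.
  by move=> jr; rewrite sum_sabs_range ?sum_lam_range ?(ltnW jr) ?rp.
have rangeE' j : (r < j <= p)%N ->
    \sum_(r <= i < j) sabs w i = top_sum w j - top_sum w r /\
    \sum_(r <= i < j) lam i = Lam lam j - Lam lam r.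
  by move=> /andP[rj jp]; rewrite sum_sabs_range ?sum_lam_range ?(ltnW rj) ?jp.
split=> -[H1 H2]; split=> j hj.
- by have [<- <-] := rangeE j hj; exact: H1.
- by have [<- <-] := rangeE' j hj; exact: H2.
- by have [e1 e2] := rangeE j hj; move: (H1 j hj); rewrite e1 e2.
- by have [e1 e2] := rangeE' j hj; move: (H2 j hj); rewrite e1 e2.
Qed.

Lemma H_set_uniq w r s : (r <= p)%N -> (s <= p)%N ->
  H_set lam r w -> H_set lam s w -> r = s.
Proof.
move=> rp sp /(H_setE w r rp)[Hr1 Hr2] /(H_setE w s sp)[Hs1 Hs2].
case: (ltngtP r s) => [rs|sr|//]; exfalso.
- by have := Hs1 r rs; have := Hr2 s; rewrite rs sp => /(_ isT); lra.
- by have := Hr1 s sr; have := Hs2 r; rewrite sr rp => /(_ isT); lra.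
Qed.

End HSet.

Lemma mulr_sg_le_norm {R : realDomainType} (x y : R) : x * Num.sg y <= `|x|.
Proof.
apply: le_trans (ler_norm _) _; rewrite normrM normr_sg.
by case: (y != 0); rewrite ?mulr1 ?mulr0.
Qed.

Section SlopeKKT.
Context {R : realType} {p : nat} (lam : nat -> R).
Hypothesis lam_nonincr : forall i j : nat, (i <= j < p)%N -> lam j <= lam i.
Hypothesis lam_ge0 : forall i : nat, (i < p)%N -> 0 <= lam i.
Local Notation J := (@slope_pen R p lam).
Local Notation Lam := (Lam lam).
Variables (b u : 'rV[R]_p).
Hypothesis kkt : forall c : 'rV[R]_p, \sum_j u 0 j * (c 0 j - b 0 j) <= J c - J b.
Local Notation S := (supp b).

Lemma sum_abs_le_Lam (B : {set 'I_p}) : \sum_(j in B) `|u 0 j| <= Lam #|B|.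
Proof.
pose c : 'rV[R]_p := \row_j ((j \in B)%:R * Num.sg (u 0 j)).
have kkt_c : \sum_j u 0 j * ((b + c) 0 j - b 0 j) = \sum_(j in B) `|u 0 j|.
  rewrite [RHS]big_mkcond /=; apply: eq_bigr => j _.
  rewrite !mxE (addrC (b 0 j)) addrK normrEsg.
  by case: (j \in B); rewrite ?mul1r ?mul0r ?mulr0 // mulrC.
have Jc : J c <= J 0 + 1 * Lam #|B|.
  apply: slope_pen_le_Lam => //; first exact: card_le_ord.
  move=> m /andP[_ mp]; rewrite top_sum_zero add0r mul1r.
  apply: top_sum_le_card => // j.
  by rewrite mxE normrM normr_sg ger0_norm ?ler_piMr ?lern1 ?leq_b1.
have := kkt (b + c); have := slope_pen_subadd lam lam_nonincr lam_ge0 b c.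
by rewrite slope_pen0 // add0r mul1r kkt_c in Jc *; lra.
Qed.

(* The default [1] only matters when [b = 0], where [shrink = b]. *)
Definition supp_gap := \big[Num.min/1]_(j in S) `|b 0 j|.

Definition shrink : 'rV[R]_p := b - (supp_gap / 2) *: \row_j Num.sg (b 0 j).

Lemma supp_gap_gt0 : 0 < supp_gap.
Proof. by rewrite lt_bigmin // => j; rewrite inE normr_gt0. Qed.

Lemma half_supp_gap_lt j : j \in S -> supp_gap / 2 < `|b 0 j|.
Proof.
move=> jS; apply: lt_le_trans (bigmin_le_cond 1 (fun j => `|b 0 j|) jS).
by rewrite ltr_pdivrMr // ltr_pMr ?supp_gap_gt0 // ltr1n.
Qed.

Lemma abs_shrink j : `|shrink 0 j| = `|b 0 j| - supp_gap / 2 * (j \in S)%:R.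
Proof.
rewrite !mxE; case: (boolP (j \in S)) => jS; last first.
  by move: jS; rewrite inE negbK => /eqP ->; rewrite sgr0 !mulr0 !subr0.
have -> : b 0 j - supp_gap / 2 * Num.sg (b 0 j)
          = Num.sg (b 0 j) * (`|b 0 j| - supp_gap / 2).
  by rewrite mulrBr -numEsg (mulrC (supp_gap / 2)).
have bj0 : b 0 j != 0 by rewrite inE in jS.
rewrite mulr1 normrM normr_sg bj0 mul1r ger0_norm // subr_ge0.
exact/ltW/half_supp_gap_lt.
Qed.

Lemma supp_shrink : supp shrink = S.
Proof.
apply/setP => j; rewrite [j \in supp shrink]inE -normr_gt0 abs_shrink.
case: (boolP (j \in S)) => jS; first by rewrite mulr1 subr_gt0 half_supp_gap_lt.
by rewrite mulr0 subr0 normr_gt0; apply/negbTE; rewrite inE in jS.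
Qed.

Lemma top_sum_shrink m : (m <= p)%N ->
  top_sum shrink m + supp_gap / 2 * (minn m #|S|)%:R <= top_sum b m.
Proof.
move=> mp; set B := top_set shrink m.
rewrite -[X in top_sum b X](card_top_set shrink m mp); apply: le_trans (top_sum_max b B).
rewrite (eq_bigr (fun j => `|shrink 0 j| + supp_gap / 2 * (j \in S)%:R)); last first.
  by move=> j _; rewrite abs_shrink subrK.
rewrite big_split /= -mulr_sumr sum_natr_mem lerD2l.
rewrite ler_wpM2l ?divr_ge0 ?(ltW supp_gap_gt0) // ler_nat.
by rewrite -supp_shrink top_set_meets_supp.
Qed.

Lemma sum_sg_supp_ge : Lam #|S| <= \sum_(j in S) u 0 j * Num.sg (b 0 j).
Proof.
have t_gt0 : 0 < supp_gap / 2 by rewrite divr_gt0 // supp_gap_gt0.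
have J_shrink : J shrink <= J b + (- (supp_gap / 2)) * Lam #|S|.
  apply: slope_pen_le_Lam => //; first exact: card_le_ord.
  by move=> m /andP[_ mp]; have := top_sum_shrink m mp; lra.
have kkt_shrink : \sum_j u 0 j * (shrink 0 j - b 0 j)
    = - (supp_gap / 2) * \sum_(j in S) u 0 j * Num.sg (b 0 j).
  rewrite mulr_sumr [RHS]big_mkcond; apply: eq_bigr => j _; rewrite !mxE.
  case: (boolP (j \in S)) => jS; first by ring.
  by move: jS; rewrite inE negbK => /eqP ->; rewrite sgr0; ring.
have := kkt shrink; rewrite kkt_shrink => le_kkt.
by rewrite -(ler_pM2l t_gt0); lra.
Qed.

Lemma sum_abs_supp : \sum_(j in S) `|u 0 j| = Lam #|S|.
Proof.
apply/eqP; rewrite eq_le sum_abs_le_Lam /=.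
by apply: le_trans sum_sg_supp_ge _; apply: ler_sum => j _; exact: mulr_sg_le_norm.
Qed.

Lemma mul_sg_supp j : j \in S -> u 0 j * Num.sg (b 0 j) = `|u 0 j|.
Proof.
have gap_eq0 : \sum_(j in S) (`|u 0 j| - u 0 j * Num.sg (b 0 j)) = 0.
  apply/le_anti/andP; split; first by rewrite sumrB sum_abs_supp subr_le0 sum_sg_supp_ge.
  by rewrite sumr_ge0 // => i _; rewrite subr_ge0 mulr_sg_le_norm.
move=> jS; apply/eqP; rewrite eq_sym -subr_eq0; apply/eqP.
by apply: (psumr_eq0P _ gap_eq0) => // i _; rewrite subr_ge0 mulr_sg_le_norm.
Qed.

Variable a : R.
Hypothesis a_gt0 : 0 < a.
Local Notation T := (u + a *: b).

Lemma abs_T j : `|T 0 j| = `|u 0 j| + a * `|b 0 j|.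
Proof.
rewrite !mxE; case: (boolP (j \in S)) => jS; last first.
  by move: jS; rewrite inE negbK => /eqP ->; rewrite mulr0 addr0 normr0 mulr0 addr0.
have sg_norm1 : `|Num.sg (b 0 j)| = 1 by rewrite normr_sg; rewrite inE in jS; rewrite jS.
rewrite -[LHS]mul1r -sg_norm1 -normrM mulrDr (mulrC _ (u 0 j)) mul_sg_supp //.
by rewrite mulrCA -normrEsg ger0_norm // addr_ge0 // mulr_ge0 // ltW.
Qed.

Lemma sum_abs_T (B : {set 'I_p}) :
  \sum_(j in B) `|T 0 j| = \sum_(j in B) `|u 0 j| + a * \sum_(j in B) `|b 0 j|.
Proof. by rewrite mulr_sumr -big_split; apply: eq_bigr => j _; rewrite abs_T. Qed.

Lemma top_sum_T_le k : (k <= p)%N ->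
  top_sum T k <= Lam k + a * \sum_(j in top_set T k) `|b 0 j|.
Proof.
move=> kp; rewrite {1}/top_sum sum_abs_T lerD2r.
by have := sum_abs_le_Lam (top_set T k); rewrite card_top_set.
Qed.

Lemma top_sum_T_supp : Lam #|S| + a * \sum_j `|b 0 j| <= top_sum T #|S|.
Proof.
apply: le_trans (top_sum_max T S).
by rewrite sum_abs_T sum_abs_supp sum_abs_supp_all.
Qed.

Lemma H_set_T : H_set lam #|S| T.
Proof.
apply/H_setE; first exact: card_le_ord.
split=> j hj; have := top_sum_T_supp.
- have jp : (j <= p)%N by apply: leq_trans (ltnW hj) (card_le_ord S).
  have := top_sum_T_le j jp; have := sum_abs_lt_all b (top_set T j).
  rewrite card_top_set // -(ltr_pM2l a_gt0) => /(_ hj); lra.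
- have := top_sum_T_le j (andP hj).2.
  have := ler_wpM2l (ltW a_gt0) (sum_abs_le_all b (top_set T j)); lra.
Qed.

Lemma abs_T_supp j : j \in S -> lam #|S|.-1 < `|T 0 j|.
Proof.
move=> jS; have := sum_abs_le_Lam (S :\ j); have := sum_abs_supp.
rewrite (big_setD1 j jS) (cardsD1 j S) jS /Lam big_nat_recr //= abs_T.
have : 0 < a * `|b 0 j| by rewrite mulr_gt0 // normr_gt0; rewrite inE in jS.
lra.
Qed.

Lemma abs_T_off j : j \notin S -> (#|S| < p)%N /\ `|T 0 j| <= lam #|S|.
Proof.
move=> jS; have cardS1 : #|j |: S| = #|S|.+1 by rewrite cardsU1 jS.
split; first by rewrite -cardS1 card_le_ord.
have := sum_abs_le_Lam (j |: S); have := sum_abs_supp.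
rewrite (big_setU1 _ jS) cardS1 /Lam big_nat_recr //= abs_T.
by move: jS; rewrite inE negbK => /eqP ->; rewrite normr0 mulr0 addr0; lra.
Qed.

Lemma T_event_iff r j : (r <= p)%N ->
  (lam r.-1 < `|T 0 j| /\ H_set lam r T) <-> (b 0 j != 0 /\ #|S| = r).
Proof.
move=> rp; split => [[lt_lamT HrT]|[bj0 <-]].
  have Sr : #|S| = r by exact: H_set_uniq (card_le_ord S) rp H_set_T HrT.
  split=> //; apply/negP => /negPn bj0.
  have jS : j \notin S by rewrite inE.
  have [Sp leT] := abs_T_off j jS.
  have : lam #|S| <= lam #|S|.-1 by apply: lam_nonincr; rewrite leq_pred.
  by rewrite -Sr in lt_lamT; lra.
by split; [apply: abs_T_supp; rewrite inE | exact: H_set_T].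
Qed.

End SlopeKKT.

Lemma fdp_decomp {R : realType} {p : nat} (b0 bh : 'rV[R]_p) :
  (nV b0 bh)%:R / (maxn (nR bh) 1)%:R = \sum_(1 <= r < p.+1)
    r%:R^-1 * \sum_(i | b0 0 i == 0) ((bh 0 i != 0) && (nR bh == r))%:R :> R.
Proof.
have inner r : \sum_(i | b0 0 i == 0) ((bh 0 i != 0) && (nR bh == r))%:R
               = (nR bh == r)%:R * (nV b0 bh)%:R :> R.
  case: (nR bh == r); last by rewrite mul0r big1 // => i _; rewrite andbF.
  rewrite mul1r /nV -sum1_card natr_sum big_mkcond [RHS]big_mkcond /=.
  by apply: eq_bigr => i _; rewrite inE andbT; case: (b0 0 i == 0); case: (bh 0 i != 0).
under eq_bigr do rewrite inner.
have [nR0|nR_gt0] := posnP (nR bh).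
  have -> : nV b0 bh = 0%N.
    apply/eqP; rewrite -leqn0 -nR0 subset_leq_card //.
    by apply/fintype.subsetP => j; rewrite !inE => /andP[].
  by rewrite mul0r big1 // => r _; rewrite !mulr0.
rewrite (bigD1_seq (nR bh)) /= ?mem_index_iota ?nR_gt0 ?ltnS ?card_le_ord ?iota_uniq //.
rewrite big1 ?addr0 => [|r /negbTE]; last by rewrite eq_sym => ->; rewrite mul0r mulr0.
by rewrite eqxx mul1r mulrC (maxn_idPl nR_gt0).
Qed.

Section Events.
Local Open Scope classical_set_scope.
Context {d} {Omega : measurableType d} {R : realType}.

Lemma indic_bool (f : Omega -> bool) w : \1_[set x | f x] w = (f w)%:R :> R.
Proof.
rewrite indicE; case: (boolP (f w)) => fw; first by rewrite mem_set.
by rewrite memNset //; exact/negP.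
Qed.

Lemma measurable_neq0 (f : Omega -> R) : measurable_fun setT f ->
  measurable [set w | f w != 0].
Proof.
move=> mf; have := mf measurableT _ (measurableC (measurable_set1 (0 : R))).
by rewrite setTI; congr measurable; apply/seteqP; split => w /= /eqP.
Qed.

Variable p : nat.
Variable bhat : Omega -> 'rV[R]_p.
Hypothesis bhat_meas : forall j, measurable_fun setT (fun w => bhat w 0 j).

Lemma measurable_nR_eq r : measurable [set w | nR (bhat w) == r].
Proof.
have nRE w : (nR (bhat w))%:R = \sum_j \1_[set x | bhat x 0 j != 0] w :> R.
  rewrite /nR -sum1_card natr_sum big_mkcond.
  by apply: eq_bigr => j _; rewrite indic_bool inE; case: (_ != 0).
have mnR : measurable_fun setT (fun w => (nR (bhat w))%:R : R).
  rewrite (funext nRE); apply: measurable_sum => j.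
  exact/measurable_indic/measurable_neq0.
have := mnR measurableT _ (measurable_set1 (r%:R : R)).
rewrite setTI; congr measurable; apply/seteqP; split => w /=.
- by move/eqP; rewrite eqr_nat.
- by move/eqP ->.
Qed.

Lemma measurable_discovery r i :
  measurable [set w | (bhat w 0 i != 0) && (nR (bhat w) == r)].
Proof.
rewrite (_ : [set w | _] = [set w | bhat w 0 i != 0] `&` [set w | nR (bhat w) == r]).
  exact/measurableI/measurable_nR_eq/measurable_neq0.
by apply/seteqP; split => w /= => [/andP|[-> ->]].
Qed.

End Events.

Section Expectation.
Context {d} {Omega : measurableType d} {R : realType}.

Lemma integral_sum_indic (mu : {measure set Omega -> \bar R}) (K : Type)
    (t : seq K) (E : K -> set Omega) : (forall i, measurable (E i)) ->
  (\int[mu]_w (\sum_(i <- t) \1_(E i) w)%:E = \sum_(i <- t) mu (E i))%E.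
Proof.
move=> mE; under eq_integral do rewrite -sumEFin.
rewrite ge0_integral_sum //.
  by apply: eq_bigr => i _; rewrite integral_indic ?setIT.
by move=> i; apply/measurable_EFinP/measurable_indic.
Qed.

Lemma expectation_comb_indic (P : probability Omega R) (I K : Type) (s : seq I)
    (c : I -> R) (t : seq K) (E : I -> K -> set Omega) :
  (forall r, 0 <= c r) -> (forall r i, measurable (E r i)) ->
  ('E_P[fun w => (\sum_(r <- s) c r * \sum_(i <- t) \1_(E r i) w)%R]
   = \sum_(r <- s) (c r)%:E * \sum_(i <- t) P (E r i))%E.
Proof.
move=> c_ge0 mE; rewrite unlock; under eq_integral do rewrite -sumEFin.
rewrite ge0_integral_sum //.
- apply: eq_bigr => r _; under eq_integral do rewrite EFinM.
  rewrite ge0_integralZl_EFin ?integral_sum_indic //.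
    by move=> w _; rewrite lee_fin sumr_ge0.
  apply/measurable_EFinP/measurable_sum => i.
  exact: measurable_indic.
- move=> r; apply/measurable_EFinP/measurable_funM; first exact: measurable_cst.
  by apply: measurable_sum => i; exact: measurable_indic.
- by move=> r w _; rewrite lee_fin mulr_ge0 ?sumr_ge0.
Qed.

Lemma expectation_fdp (P : probability Omega R) (p : nat) (bhat : Omega -> 'rV[R]_p)
    (b0 : 'rV[R]_p) : (forall j : 'I_p, measurable_fun setT (fun w => bhat w 0 j)) ->
  ('E_P[fun w => ((nV b0 (bhat w))%:R / (maxn (nR (bhat w)) 1)%:R)%R] =
   \sum_(1 <= r < p.+1) (r%:R^-1)%:E * \sum_(i | (b0 0 i == 0)%R)
     P [set w | ((bhat w 0 i != 0) && (nR (bhat w) == r))%R]%classic)%E.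
Proof.
move=> bhat_meas.
under eq_fun do rewrite fdp_decomp.
under [RHS]eq_bigr do rewrite -big_filter.
rewrite -expectation_comb_indic => [||r i]; last exact: measurable_discovery.
- congr ('E_P[_])%E; apply/funext => w; apply: eq_bigr => r _.
  by rewrite big_filter; congr (_ * _); apply: eq_bigr => i _; rewrite indic_bool.
- by move=> r; rewrite invr_ge0.
Qed.

End Expectation.

Theorem corollary1 (d : measure_display) (Omega : measurableType d)
  (R : realType) (P : probability Omega R) (p : nat)
  (l : Omega -> 'rV[R]_p -> R) (lam : nat -> R)
  (bhat : Omega -> 'rV[R]_p) (b0 : 'rV[R]_p) (a : R) :
  (forall w, convex_fun (l w)) ->
  (forall w (b : 'rV[R]_p), differentiable (l w) b) ->
  (forall i j : nat, (i <= j < p)%N -> lam j <= lam i) ->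
  (forall i : nat, (i < p)%N -> 0 <= lam i) ->
  (forall w (b : 'rV[R]_p),
     l w (bhat w) + slope_pen lam (bhat w) <= l w b + slope_pen lam b) ->
  (forall j : 'I_p, measurable_fun setT (fun w => bhat w 0 j)) ->
  (forall j : 'I_p, measurable_fun setT (fun w => grad (l w) (bhat w) 0 j)) ->
  0 < a ->
  let T := fun w => - grad (l w) (bhat w) + a *: bhat w in
  ('E_P[fun w => ((nV b0 (bhat w))%:R / (maxn (nR (bhat w)) 1)%:R)%R] =
   \sum_(1 <= r < p.+1)
      ((r%:R)^-1 : R)%:E *
      \sum_(i : 'I_p | (b0 0 i == 0)%R)
         P [set w : Omega | (lam r.-1 < `|T w 0 i|)%R /\ H_set lam r (T w)]%classic)%E.
Proof.
move=> _ l_diff lam_nonincr lam_ge0 bhat_min bhat_meas _ a_gt0 T.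
have kkt w (c : 'rV[R]_p) :
    \sum_j (- grad (l w) (bhat w)) 0 j * (c 0 j - bhat w 0 j)
    <= slope_pen lam c - slope_pen lam (bhat w).
  apply: first_order_grad; [exact: slope_pen_convex | exact: l_diff | exact: bhat_min].
rewrite expectation_fdp //; apply: eq_big_nat => r /andP[_ rp].
congr (_ * _)%E; apply: eq_bigr => i _; congr (P _); apply/seteqP.
have eventE w := T_event_iff _ lam_nonincr lam_ge0 _ _ (kkt w) _ a_gt0 r i rp.
split => w /=.
- by case/andP => bi0 /eqP Sr; apply/eventE.
- by move/eventE => [-> Sr]; apply/eqP.
Qed.
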